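(* Let $\mu, t \in \mathbb{R}$ and $\sigma > 0$. Let $\mathcal{L}_S(\mu,\sigma)$ be the set of all probability distributions $F$ on $\mathbb{R}$ such that, for $X \sim F$, $\mathbb{E}^F[X]=\mu$, $\mathbb{E}^F[X^2]=\mu^2+\sigma^2$, and $F$ is symmetric. Then \[ \sup_{F \in \mathcal{L}_{S}(\mu, \sigma)}\mathbb{E}^{F}[(X-t)_{+}^2]= \begin{cases} \sigma^2 + (t-\mu)^2, & t \le \mu-\sigma,\\ \frac{1}{2}(\mu- t+\sigma)^2, & \mu-\sigma < t\leq \mu,\\ \frac{\sigma^2}{2}, & t > \mu. \end{cases} \]
   Context: For $x\in\mathbb{R}$, $(x)_+=\max\{x,0\}$. A distribution $F$ of a random variable $X$ is called symmetric if there exists a constant $a\in\mathbb{R}$ such that $\mathbb{P}(X-a>x)=\mathbb{P}(X-a<-x)$ for all $x\in\mathbb{R}$ under $F$. $\mathbb{E}^F$ denotes expectation when $X$ has distribution $F$. *)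

From HB Require Import structures.
From mathcomp Require Import all_boot all_order all_algebra.
From mathcomp Require Import all_classical all_reals all_analysis.
Set Implicit Arguments. Unset Strict Implicit. Unset Printing Implicit Defensive.
Import Order.TTheory GRing.Theory Num.Theory.
Local Open Scope classical_set_scope.
Local Open Scope ring_scope.

(* F : a probability distribution on the Borel sets of R; X is the identity. *)

Definition symmetric_distr (R : realType) (F : probability R R) : Prop :=
  exists a : R, forall x : R,
    F [set y : R | x < y - a] = F [set y : R | y - a < - x].

Definition LS (R : realType) (mu sigma : R) : set (probability R R) :=
  [set F : probability R R | [/\ F.-integrable setT (fun x : R => x%:E),
              (\int[F]_x (x%:E) = mu%:E)%E,
              (\int[F]_x ((x ^+ 2)%:E) = (mu ^+ 2 + sigma ^+ 2)%:E)%E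
            & symmetric_distr F]].

Definition stop_loss2 (R : realType) (t : R) (F : probability R R) : \bar R :=
  (\int[F]_x (((Num.max (x - t) 0) ^+ 2)%:E))%E.

From HB Require Import structures.
From mathcomp Require Import all_boot all_order all_algebra.
From mathcomp Require Import all_classical all_reals all_analysis measurable_realfun.
From mathcomp Require Import ring lra.
Set Implicit Arguments.
Unset Strict Implicit.
Unset Printing Implicit Defensive.
Import Order.TTheory GRing.Theory Num.Theory.
Local Open Scope classical_set_scope.
Local Open Scope ring_scope.

(* A law F in LS(mu, sigma) is symmetric about its mean mu, so reflecting x to
   2 mu - x gives 2 E(X - t)_+^2 = E[paired_loss mu t X], where
   paired_loss mu t x = (x - t)_+^2 + (2 mu - x - t)_+^2.  Hence every quadratic
   majorant A + C (x - mu)^2 of paired_loss yields E(X - t)_+^2 <= (A + C sigma^2) / 2.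
   For t <= mu the majorant can be chosen to touch paired_loss at x = mu +- sigma,
   so the two-point law on mu +- sigma attains the bound.  For t > mu the majorant
   is (x - mu)^2 and the bound sigma^2 / 2 is only approached, by the symmetric
   three-point laws with mass sigma^2 / (2 M^2) at mu +- M, as M -> +oo. *)


Section paired_loss.
Context {R : realFieldType}.
Implicit Types (mu s t x y : R).

Lemma max0_sqr_cases y :
  (0 <= y /\ Num.max y 0 ^+ 2 = y ^+ 2) \/ (y <= 0 /\ Num.max y 0 ^+ 2 = 0).
Proof.
have [y_le0|y_gt0] := leP y 0; last by left; rewrite ltW.
by right; rewrite expr0n.
Qed.

Lemma ger0_max0_sqr y : 0 <= y -> Num.max y 0 ^+ 2 = y ^+ 2.
Proof. by move=> y_ge0; have [y_le0|//] := leP y 0; have -> : y = 0 by lra. Qed.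

Lemma ler0_max0_sqr y : y <= 0 -> Num.max y 0 ^+ 2 = 0.
Proof. by move=> y_le0; have [_|y_gt0] := leP y 0; [rewrite expr0n | lra]. Qed.

Lemma max0_sqr_le y : Num.max y 0 ^+ 2 <= y ^+ 2.
Proof. by case: (max0_sqr_cases y) => [[_ ->]|[_ ->]]; rewrite ?sqr_ge0. Qed.

Definition paired_loss mu t x : R :=
  Num.max (x - t) 0 ^+ 2 + Num.max (2 * mu - x - t) 0 ^+ 2.

Lemma paired_loss_ge0 mu t x : 0 <= paired_loss mu t x.
Proof. by rewrite addr_ge0 ?sqr_ge0. Qed.

Lemma paired_loss_le_sqr mu t x :
  paired_loss mu t x <= 2 * (t - mu) ^+ 2 + 2 * (x - mu) ^+ 2.
Proof.
rewrite (_ : _ + _ = (x - t) ^+ 2 + (2 * mu - x - t) ^+ 2); last by ring.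
by rewrite lerD ?max0_sqr_le.
Qed.

Lemma paired_loss_le_mid mu s t x : 0 < s -> mu - s < t -> t <= mu ->
  paired_loss mu t x <=
  (mu - t) * (s + (mu - t)) + (s + (mu - t)) / s * (x - mu) ^+ 2.
Proof.
move=> s_gt0 t_gt t_le; rewrite /paired_loss.
set c := mu - t; set u := x - mu.
have -> : x - t = u + c by rewrite /u /c; ring.
have -> : 2 * mu - x - t = c - u by rewrite /u /c; ring.
have c_ge0 : 0 <= c by rewrite /c; lra.
have c_lt_s : c < s by rewrite /c; lra.
rewrite -(ler_pM2r s_gt0).
have -> : (c * (s + c) + (s + c) / s * u ^+ 2) * s = c * (s + c) * s + (s + c) * u ^+ 2.
  by field; rewrite gt_eqF.
case: (max0_sqr_cases (u + c)) => [[? ->]|[? ->]];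
case: (max0_sqr_cases (c - u)) => [[? ->]|[? ->]].
- have : 0 <= (s - c) * (c * (s - c) + (c ^+ 2 - u ^+ 2)).
    apply: mulr_ge0; first lra.
    apply: addr_ge0; [apply: mulr_ge0|]; nra.
  nra.
- have : 0 <= c * (s - u) ^+ 2 by rewrite mulr_ge0 ?sqr_ge0.
  nra.
- have : 0 <= c * (s + u) ^+ 2 by rewrite mulr_ge0 ?sqr_ge0.
  nra.
- nra.
Qed.

Lemma paired_loss_le_right mu t x : mu < t -> paired_loss mu t x <= (x - mu) ^+ 2.
Proof.
move=> t_gt; rewrite /paired_loss.
case: (max0_sqr_cases (x - t)) => [[? ->]|[? ->]];
case: (max0_sqr_cases (2 * mu - x - t)) => [[? ->]|[? ->]].
- lra.
- have : 0 <= (t - mu) * (x - mu + (x - t)) by apply: mulr_ge0; lra.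
  nra.
- have : 0 <= (t - mu) * (mu - x + (2 * mu - x - t)) by apply: mulr_ge0; lra.
  nra.
- by rewrite addr0 sqr_ge0.
Qed.

End paired_loss.

Definition symmetric_about (R : realType) (F : probability R R) (a : R) : Prop :=
  forall x : R, F [set y : R | x < y - a] = F [set y : R | y - a < - x].

Section symmetric_about.
Context {R : realType} (F : probability R R) (a : R).
Hypothesis Fsym : symmetric_about F a.

Let measurable_reflect : measurable_fun setT (fun y : R => 2 * a - y).
Proof. exact: measurable_funB. Qed.

(* Both measures agree on the rays ]x, +oo[, a pi-system generating the Borel sets. *)
Lemma symmetric_about_pushforward A : measurable A ->
  F A = pushforward F (fun y => 2 * a - y) A.
Proof.
move=> mA.
have gen_rays : @measurable _ R = <<s @RGenOInfty.G R >>.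
  exact: RGenOInfty.measurableE.
apply: (@measure_unique _ R R _ (fun k : nat => `]- (k%:R), +oo[%classic)
  gen_rays _ _ _ F (pushforward F (fun y => 2 * a - y))) => //.
- move=> _ _ [x ->] [y ->]; exists (Num.max x y).
  by apply/seteqP; split => z /=; rewrite !in_itv /= !andbT gt_max => /andP.
- by move=> k; exists (1 *- k).
- apply/seteqP; split => // r _; exists (Num.truncn (- r)).+1 => //=.
  by rewrite in_itv /= andbT ltrNl truncnS_gt.
- move=> _ [x ->]; rewrite /pushforward.
  have := Fsym (x - a).
  have -> : [set y | x - a < y - a] = `]x, +oo[%classic.
    by apply/seteqP; split => z /=; rewrite in_itv /= andbT; lra.
  move=> Fx; apply: (eq_trans Fx); congr (F _).
  by apply/seteqP; split => z /=; rewrite in_itv /= andbT; lra.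
- by move=> k; rewrite (le_lt_trans (probability_le1 _ _)) ?ltry.
Qed.

Lemma ge0_integral_reflect (f : R -> \bar R) :
  measurable_fun setT f -> (forall x, 0 <= f x)%E ->
  (\int[F]_x f x = \int[F]_x f (2 * a - x)%R)%E.
Proof.
move=> mf f0.
rewrite (eq_measure_integral (pushforward F (fun y => 2 * a - y))); last first.
  by move=> B mB _; exact: symmetric_about_pushforward.
exact: ge0_integral_pushforward.
Qed.

Lemma symmetric_about_mean (m : R) :
  F.-integrable setT (fun x => x%:E) -> (\int[F]_x x%:E = m%:E)%E -> m = a.
Proof.
move=> Fint Fmean.
have cst_int : F.-integrable setT (fun=> (2 * a)%:E).
  exact: finite_measure_integrable_cst.
have : (\int[F]_x x%:E = \int[pushforward F (fun y => 2 * a - y)%R]_x x%:E)%E.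
  by apply: eq_measure_integral => B mB _; exact: symmetric_about_pushforward.
rewrite integral_pushforward //=; last first.
  by rewrite preimage_setT; apply: eq_integrable (integrableB _ cst_int Fint).
rewrite preimage_setT.
rewrite integralB_EFin // integral_cst // [X in (_ * X)%E]probability_setT.
rewrite mule1 Fmean -EFinB.
by move=> [Em]; lra.
Qed.

End symmetric_about.

Lemma integral_sqr_sub_mean (R : realType) (F : probability R R) (mu s2 : R) :
  F.-integrable setT (fun x => x%:E) ->
  (\int[F]_x x%:E = mu%:E)%E ->
  (\int[F]_x (x ^+ 2)%:E = (mu ^+ 2 + s2)%:E)%E ->
  (\int[F]_x ((x - mu) ^+ 2)%:E = s2%:E)%E.
Proof.
move=> Fint Fmean Fsqr.
have sqr_int : F.-integrable setT (fun x => (x ^+ 2)%:E).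
  apply/integrableP; split; first by apply/measurable_EFinP; exact: measurable_funX.
  under eq_integral do rewrite /= ger0_norm ?sqr_ge0 //.
  by rewrite Fsqr ltry.
have scaled_int : F.-integrable setT (fun x => (2 * mu * x)%:E).
  by under eq_fun do rewrite EFinM; exact: integrableZl.
have lin_int : F.-integrable setT (fun x => (2 * mu * x - mu ^+ 2)%:E).
  exact: integrableB scaled_int (finite_measure_integrable_cst _ _ _).
have lin_mean : (\int[F]_x (2 * mu * x - mu ^+ 2)%:E = (mu ^+ 2)%:E)%E.
  rewrite integralB_EFin //; last exact: finite_measure_integrable_cst.
  under eq_integral do rewrite EFinM.
  rewrite integralZl // Fmean integral_cst // [X in (_ - _ * X)%E]probability_setT.
  by rewrite mule1 -EFinM -EFinB; congr EFin; ring.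
rewrite (eq_integral (fun x : R => (x ^+ 2 - (2 * mu * x - mu ^+ 2))%:E)); last first.
  by move=> x _; congr EFin; ring.
by rewrite integralB_EFin // Fsqr lin_mean -EFinB; congr EFin; ring.
Qed.

Section stop_loss2_upper_bound.
Context {R : realType}.
Implicit Types (F : probability R R) (mu sigma t : R).

Lemma measurable_max0_sqr (f : R -> R) : measurable_fun setT f ->
  measurable_fun setT (fun x => Num.max (f x) 0 ^+ 2).
Proof. by move=> mf; apply/measurable_funX/measurable_maxr. Qed.

Lemma measurable_paired_loss mu t : measurable_fun setT (paired_loss mu t).
Proof.
apply: measurable_funD; apply: measurable_max0_sqr; apply: measurable_funB => //.
exact: measurable_funB.
Qed.

Lemma stop_loss2_ge0 t F : (0 <= stop_loss2 t F)%E.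
Proof. by apply: integral_ge0 => x _; rewrite lee_fin sqr_ge0. Qed.

Lemma stop_loss2_reflect mu t F : symmetric_about F mu ->
  (stop_loss2 t F + stop_loss2 t F = \int[F]_x (paired_loss mu t x)%:E)%E.
Proof.
move=> Fsym.
have mright : measurable_fun setT (fun x : R => (Num.max (x - t) 0 ^+ 2)%:E).
  by apply/measurable_EFinP; apply: measurable_max0_sqr; exact: measurable_funB.
have mleft : measurable_fun setT (fun x : R => (Num.max (2 * mu - x - t) 0 ^+ 2)%:E).
  apply/measurable_EFinP; apply: measurable_max0_sqr.
  by apply: measurable_funB => //; exact: measurable_funB.
rewrite {2}/stop_loss2 (ge0_integral_reflect Fsym) //; last first.
  by move=> x; rewrite lee_fin sqr_ge0.
by rewrite /stop_loss2 -ge0_integralD // => x _; rewrite lee_fin sqr_ge0.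
Qed.

Lemma stop_loss2_le_of_paired_loss_le mu sigma t (A C : R) F :
  LS mu sigma F -> 0 <= C ->
  (forall x, paired_loss mu t x <= A + C * (x - mu) ^+ 2) ->
  (stop_loss2 t F <= ((A + C * sigma ^+ 2) / 2)%:E)%E.
Proof.
move=> [Fint Fmean Fsqr [a Fsym]] C0 loss_le.
have A0 : 0 <= A.
  have := loss_le mu; rewrite subrr expr0n mulr0 addr0.
  exact: le_trans (paired_loss_ge0 _ _ _).
have mu_a := symmetric_about_mean Fsym Fint Fmean; subst a.
have Fvar := integral_sqr_sub_mean Fint Fmean Fsqr.
have mdev : measurable_fun setT (fun x : R => (x - mu) ^+ 2).
  by apply: measurable_funX; exact: measurable_funB.
have twice : (stop_loss2 t F + stop_loss2 t F <= (A + C * sigma ^+ 2)%:E)%E.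
  rewrite (stop_loss2_reflect _ Fsym).
  apply: (@le_trans _ _ (\int[F]_x (A + C * (x - mu) ^+ 2)%:E)%E).
    apply: ge0_le_integral => //.
    - by move=> x _; rewrite lee_fin paired_loss_ge0.
    - by apply/measurable_EFinP; exact: measurable_paired_loss.
    - by apply/measurable_EFinP; apply: measurable_funD => //; exact: measurable_funM.
    - by move=> x _; rewrite lee_fin.
  under eq_integral do rewrite EFinD EFinM.
  rewrite ge0_integralD //; last first.
  - by apply: emeasurable_funM => //; exact/measurable_EFinP.
  - by move=> x _; rewrite -EFinM lee_fin mulr_ge0 ?sqr_ge0.
  rewrite ge0_integralZl_EFin //;
    [|by move=> x _; rewrite lee_fin sqr_ge0|exact/measurable_EFinP].
  by rewrite Fvar integral_cst // [X in (_ * X)%E]probability_setT mule1 -EFinM -EFinD.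
move: (stop_loss2 t F) (stop_loss2_ge0 t F) twice => [s| |] //=.
by rewrite -EFinD !lee_fin => ? ?; lra.
Qed.

End stop_loss2_upper_bound.

Section three_point.
Context {R : realType} (mu sigma M : R).
Hypotheses (sigma_gt0 : 0 < sigma) (sigma_le_M : sigma <= M).

Let p := sigma ^+ 2 / M ^+ 2.

Let M_gt0 : 0 < M. Proof. exact: lt_le_trans sigma_le_M. Qed.

Let p_half_ge0 : 0 <= p / 2.
Proof. by rewrite /p !divr_ge0 ?sqr_ge0. Qed.

Let one_sub_p_ge0 : 0 <= 1 - p.
Proof.
rewrite subr_ge0 /p ler_pdivrMr ?exprn_gt0 // mul1r.
by rewrite ler_sqr ?nnegrE ?(ltW sigma_gt0) ?(ltW M_gt0).
Qed.

Definition three_point : set R -> \bar R :=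
  measure_add (mscale (NngNum p_half_ge0) (measure_add \d_(mu - M) \d_(mu + M)))
              (mscale (NngNum one_sub_p_ge0) \d_mu).

HB.instance Definition _ := Measure.on three_point.

Lemma three_pointE A : three_point A =
  ((p / 2)%:E * (\d_(mu - M)%R A + \d_(mu + M)%R A) + (1 - p)%:E * \d_mu A)%E.
Proof. by rewrite /three_point measure_addE; congr (_ + _)%E; rewrite -measure_addE. Qed.

Let three_point_setT : three_point setT = 1%E.
Proof.
by rewrite three_pointE !diracT -EFinD; congr EFin; field.
Qed.

HB.instance Definition _ :=
  Measure_isProbability.Build _ _ _ three_point three_point_setT.

Lemma integral_three_point (f : R -> R) :
  measurable_fun setT f -> (forall x, 0 <= f x) ->
  (\int[three_point]_x (f x)%:E =
   (p / 2 * (f (mu - M) + f (mu + M)) + (1 - p) * f mu)%:E)%E.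
Proof.
move=> mf f_ge0.
have mfE : measurable_fun setT (fun x => (f x)%:E) by exact/measurable_EFinP.
have fE_ge0 x : setT x -> (0 <= (f x)%:E)%E by rewrite lee_fin.
rewrite !ge0_integral_measure_add // !ge0_integral_mscale //.
by rewrite ge0_integral_measure_add // !integral_dirac // !diracT !mul1e -EFinD.
Qed.

Lemma three_point_symmetric : symmetric_about three_point mu.
Proof.
move=> x /=; rewrite !three_pointE !diracE.
have mirror y z : y - mu = - (z - mu) ->
    (y \in [set w | x < w - mu]) = (z \in [set w | w - mu < - x]).
  by move=> yz; apply/idP/idP => /set_mem /= ?; apply/mem_set => /=; lra.
rewrite (mirror (mu - M) (mu + M)) ?(mirror (mu + M) (mu - M)) ?(mirror mu mu);
  try by ring.
by congr (_ * _ + _)%E; rewrite addeC.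
Qed.

Lemma three_point_LS : LS mu sigma three_point.
Proof.
have id_int : three_point.-integrable setT (fun x => x%:E).
  apply/integrableP; split; first exact/measurable_EFinP.
  by rewrite integral_three_point ?ltry //; exact: measurable_normr.
split => //; last by exists mu; exact: three_point_symmetric.
- have mean_fin := integrable_fin_num measurableT id_int.
  rewrite -(fineK mean_fin); congr EFin.
  by apply: (symmetric_about_mean three_point_symmetric id_int); rewrite fineK.
- rewrite integral_three_point //; last by move=> x; exact: sqr_ge0.
  by congr EFin; rewrite /p; field; rewrite gt_eqF.
Qed.

Lemma stop_loss2_three_point t : stop_loss2 t three_point =
  (p / 2 * (Num.max (mu - M - t) 0 ^+ 2 + Num.max (mu + M - t) 0 ^+ 2)
   + (1 - p) * Num.max (mu - t) 0 ^+ 2)%:E.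
Proof.
rewrite /stop_loss2 integral_three_point //; last by move=> x; exact: sqr_ge0.
by apply: measurable_max0_sqr; exact: measurable_funB.
Qed.

End three_point.


Section symmetric_stop_loss2_bound.
Context {R : realType}.
Implicit Types (F : probability R R) (mu sigma t : R).

Definition symmetric_stop_loss2_bound mu sigma t : R :=
  if t <= mu - sigma then sigma ^+ 2 + (t - mu) ^+ 2
  else if t <= mu then (mu - t + sigma) ^+ 2 / 2
  else sigma ^+ 2 / 2.

Lemma stop_loss2_le_bound mu sigma t F : 0 < sigma -> LS mu sigma F ->
  (stop_loss2 t F <= (symmetric_stop_loss2_bound mu sigma t)%:E)%E.
Proof.
move=> sigma_gt0 FLS; rewrite /symmetric_stop_loss2_bound.
case: ifPn => [_|]; last rewrite -ltNge => t_gt.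
  rewrite [leRHS](_ : _ = ((2 * (t - mu) ^+ 2 + 2 * sigma ^+ 2) / 2)%:E).
    exact: stop_loss2_le_of_paired_loss_le FLS _ (paired_loss_le_sqr mu t).
  by congr EFin; field.
case: ifPn => [t_le|]; last rewrite -ltNge => mu_lt.
  rewrite [leRHS](_ : _ = (((mu - t) * (sigma + (mu - t))
                            + (sigma + (mu - t)) / sigma * sigma ^+ 2) / 2)%:E).
    apply: stop_loss2_le_of_paired_loss_le FLS _ _; first by rewrite divr_ge0 //; lra.
    by move=> x; exact: paired_loss_le_mid.
  by congr EFin; field; rewrite gt_eqF.
rewrite [leRHS](_ : _ = ((0 + 1 * sigma ^+ 2) / 2)%:E); last by rewrite add0r mul1r.
apply: stop_loss2_le_of_paired_loss_le FLS _ _ => // x.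
by rewrite add0r mul1r paired_loss_le_right.
Qed.

Lemma stop_loss2_two_point mu sigma t (sigma_gt0 : 0 < sigma) : t <= mu ->
  stop_loss2 t (three_point mu sigma_gt0 (lexx sigma)) =
  (symmetric_stop_loss2_bound mu sigma t)%:E.
Proof.
move=> t_le; rewrite stop_loss2_three_point divff ?sqrf_eq0 ?gt_eqF //.
rewrite subrr mul0r addr0 /symmetric_stop_loss2_bound t_le.
case: ifPn => [t_low|]; last rewrite -ltNge => t_high.
  by rewrite !ger0_max0_sqr; [congr EFin; field | lra | lra].
by rewrite ler0_max0_sqr ?ger0_max0_sqr; [congr EFin; field | lra | lra].
Qed.

Lemma stop_loss2_three_point_ge mu sigma M t
    (sigma_gt0 : 0 < sigma) (sigma_le_M : sigma <= M) :
  mu < t -> t - mu <= M ->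
  ((sigma ^+ 2 / 2 - sigma ^+ 2 * (t - mu) / M)%:E <=
   stop_loss2 t (three_point mu sigma_gt0 sigma_le_M))%E.
Proof.
move=> mu_lt d_le_M; have M_gt0 : 0 < M by exact: lt_le_trans sigma_le_M.
rewrite stop_loss2_three_point lee_fin.
rewrite [Num.max (mu - M - t) 0 ^+ 2]ler0_max0_sqr; last lra.
rewrite [Num.max (mu - t) 0 ^+ 2]ler0_max0_sqr; last lra.
rewrite ger0_max0_sqr; last lra.
rewrite mulr0 addr0 add0r; set d := t - mu.
have -> : sigma ^+ 2 / M ^+ 2 / 2 * (mu + M - t) ^+ 2 =
          sigma ^+ 2 / 2 - sigma ^+ 2 * d / M + sigma ^+ 2 * d ^+ 2 / (2 * M ^+ 2).
  by rewrite /d; field; rewrite gt_eqF.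
by rewrite lerDl; apply: divr_ge0; apply: mulr_ge0; rewrite ?sqr_ge0 ?ler0n.
Qed.

Lemma stop_loss2_bound_approx mu sigma t (eps : R) : 0 < sigma -> 0 < eps ->
  exists2 F, LS mu sigma F &
    ((symmetric_stop_loss2_bound mu sigma t)%:E <= stop_loss2 t F + eps%:E)%E.
Proof.
move=> sigma_gt0 eps_gt0.
have [t_le|mu_lt] := leP t mu.
  exists (three_point mu sigma_gt0 (lexx sigma)); first exact: three_point_LS.
  by rewrite stop_loss2_two_point // leeDl // lee_fin ltW.
rewrite /symmetric_stop_loss2_bound !ifN -?ltNge //; last by lra.
set d := t - mu.
(* [M] is large enough for [sigma ^+ 2 * d / M <= eps]. *)
set M := sigma + d + sigma ^+ 2 * d / eps.
have d_gt0 : 0 < d by rewrite subr_gt0.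
have far_ge0 : 0 <= sigma ^+ 2 * d / eps.
  exact: divr_ge0 (mulr_ge0 (sqr_ge0 _) (ltW d_gt0)) (ltW eps_gt0).
have sigma_le_M : sigma <= M by rewrite /M; lra.
exists (three_point mu sigma_gt0 sigma_le_M); first exact: three_point_LS.
apply: le_trans (leeD2r _ (stop_loss2_three_point_ge _ _ _ _)) => //; last first.
  by rewrite -/d /M; lra.
rewrite -EFinD lee_fin -/d -addrA lerDl addrC subr_ge0 ler_pdivrMr; last first.
  by rewrite /M; lra.
have -> : eps * M = eps * (sigma + d) + sigma ^+ 2 * d.
  by rewrite /M; field; rewrite gt_eqF.
by rewrite lerDr mulr_ge0 ?ltW //; lra.
Qed.

End symmetric_stop_loss2_bound.


Theorem theorem1 (R : realType) (mu sigma t : R) (hsigma : 0 < sigma) :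
  ereal_sup [set stop_loss2 t F | F in LS mu sigma] =
  (if t <= mu - sigma then sigma ^+ 2 + (t - mu) ^+ 2
   else if t <= mu then (mu - t + sigma) ^+ 2 / 2
   else sigma ^+ 2 / 2)%:E.
Proof.
rewrite -/(symmetric_stop_loss2_bound mu sigma t).
apply/eqP; rewrite eq_le; apply/andP; split.
  by apply: ge_ereal_sup => _ [F FLS <-]; exact: stop_loss2_le_bound.
apply/lee_addgt0Pr => eps eps_gt0.
have [F FLS bound_le] := stop_loss2_bound_approx mu t hsigma eps_gt0.
apply: (le_trans bound_le); apply: leeD2r.
by apply: ereal_sup_ubound; exists F.
Qed.
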